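(* Fix any non-negative integer load vector $x^{(t_1)}$ with $\|x^{(t_1)}\|_{1} \leq n \cdot \mathrm{e}^{-(\log n)^{\sigma}}$ for some constant $\sigma \in (0,1)$. Consider a round $t_2 > t_1$ such that (for the given matchings) $[t_1,t_2]$ is $(n,n^{-3})$-smoothing, and let $Z:= \sum_{v \in V} y_v x_v^{(t_2)}$, where $y$ is any non-negative vector with $\|y \|_{1} = 1$. Then for any $\delta > 0$ (and $n$ sufficiently large), \[ \Pr\left[ Z \geq \mathrm{e}^{-\frac{1}{5} (\log n)^{\sigma}} + 8 \| y \|_{\infty} (\log n)^{\delta} \right] \leq \mathrm{e}^{-(\log n)^{\delta+\sigma}/ 6}. \]
   Context: $G=(V,E)$ has $n$ nodes; a matching $\mathbf{M}^{(t)}\subseteq E$ is identified with the symmetric matrix with entries $1/2$ on $(u,u),(v,v),(u,v),(v,u)$ for $\{u,v\}\in\mathbf{M}^{(t)}$, $1$ on the diagonal for unmatched nodes, $0$ elsewhere. Discrete protocol: for each $\{u,v\}\in\mathbf{M}^{(t)}$ both nodes get $\lfloor (x^{(t-1)}_u+x^{(t-1)}_v)/2\rfloor$ tokens and the excess token (if the sum is odd) goes to $u$ or $v$ with probability $1/2$ each, independently; unmatched nodes keep their load. Continuous process: $\xi^{(t)}=\xi^{(t-1)}\mathbf{M}^{(t)}$. $[t_1,t_2]$ is $(K,\epsilon)$-smoothing if every $\xi^{(t_1)}\in\mathbb{R}^n$ with discrepancy $\max_{u,v}|\xi_u-\xi_v|\le K$ yields $\xi^{(t_2)}$ with discrepancy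 at most $\epsilon$. The probability is over the random orientations. The paper assumes $n$ sufficiently large throughout. *)

From HB Require Import structures.
From mathcomp Require Import all_boot all_order all_algebra.
From mathcomp Require Import all_classical all_reals all_analysis.
Set Implicit Arguments. Unset Strict Implicit. Unset Printing Implicit Defensive.
Import Order.TTheory GRing.Theory Num.Theory.
Local Open Scope ring_scope.

Section Defs.
Variable R : realType.
Variable n : nat.

Definition simple_graph (E : rel 'I_n) : Prop :=
  (forall u v, E u v = E v u) /\ (forall u, ~~ E u u).

(* A matching is encoded by its partner function m : m u = v if {u,v} is in
   the matching, m u = u if u is unmatched. *)
Definition is_matching (E : rel 'I_n) (m : 'I_n -> 'I_n) : Prop :=
  (forall u, m (m u) = u) /\ (forall u, m u != u -> E u (m u)).

Definition matching_mx (m : 'I_n -> 'I_n) : 'M[R]_n :=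
  \matrix_(i, j)
    (if m i == i then (i == j)%:R
     else if (j == i) || (j == m i) then 2^-1 else 0).

Fixpoint cont_run (M : nat -> 'I_n -> 'I_n) (t1 : nat) (k : nat)
  (xi : 'rV[R]_n) : 'rV[R]_n :=
  match k with
  | 0 => xi
  | k'.+1 => cont_run M t1.+1 k' (xi *m matching_mx (M t1.+1))
  end.

Definition disc_le (xi : 'rV[R]_n) (K : R) : Prop :=
  forall u v, `|xi 0 u - xi 0 v| <= K.

Definition smoothing (M : nat -> 'I_n -> 'I_n) (t1 t2 : nat) (K eps : R)
  : Prop :=
  forall xi : 'rV[R]_n, disc_le xi K -> disc_le (cont_run M t1 (t2 - t1) xi) eps.

(* One round of the discrete protocol with matching m and coins c : for a
   matched pair {u,v} with u < v, the excess token goes to u if c u is true,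
   and to v otherwise (coins at non-minimal nodes are unused). *)
Definition dstep (m : 'I_n -> 'I_n) (c : 'I_n -> bool) (x : 'I_n -> nat)
  : 'I_n -> nat :=
  fun u =>
    if m u == u then x u
    else let s := (x u + x (m u))%N in
         (s./2 + (odd s && (if (u < m u)%N then c u else ~~ c (m u))))%N.

Fixpoint drun (M : nat -> 'I_n -> 'I_n) (t : nat)
  (cs : seq ('I_n -> bool)) (x : 'I_n -> nat) : 'I_n -> nat :=
  match cs with
  | [::] => x
  | c :: cs' => drun M t.+1 cs' (dstep (M t.+1) c x)
  end.

(* Sample space for k rounds: all coin vectors, uniform distribution. *)
Definition coins (k : nat) := {ffun 'I_k -> {ffun 'I_n -> bool}}.

Definition coin_seq (k : nat) (w : coins k) : seq ('I_n -> bool) :=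
  [seq (fun u => w i u) | i <- enum 'I_k].

Definition prob (k : nat) (P : pred (coins k)) : R :=
  #|P|%:R / #|{: coins k}|%:R.

Definition load_at (M : nat -> 'I_n -> 'I_n) (t1 t2 : nat)
  (x : 'I_n -> nat) (w : coins (t2 - t1)) : 'I_n -> nat :=
  drun M t1 (coin_seq w) x.

Definition norm_inf (y : 'I_n -> R) : R := \big[Num.max/0]_(v < n) `|y v|.

End Defs.

Arguments load_at {n} M t1 t2 x w.

From HB Require Import structures.
From mathcomp Require Import all_boot all_order all_algebra.
From mathcomp Require Import all_classical all_reals all_analysis.
From mathcomp Require Import ring lra.
Import Order.TTheory GRing.Theory Num.Theory.
Set Implicit Arguments. Unset Strict Implicit. Unset Printing Implicit Defensive.
Local Open Scope ring_scope.

(* By exponential moments.  For f >= 0 put Phi_f(x) = prod_v f_v ^ x_v.  A matched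
   pair {u, v} holding s tokens ends with ceil(s/2) and floor(s/2) tokens in one
   of two equally likely orientations, and by AM-GM the average of Phi over the
   two is at most ((f_u + f_v) / 2)^s; hence
   E[Phi_f(x^(t))] <= Phi_{M^(t) f}(x^(t-1)) and, iterating,
   E[Phi_f(x^(t2))] <= Phi_{Qf}(x^(t1)) with Qf = M^(t1+1)...M^(t2) f.
   Pairing Qf with the continuous process started from the point mass n e_u,
   the (n, n^-3)-smoothing property gives (Qf)_u <= (1 + n^-3) (sum_v f_v) / n.
   With f_v = exp(lam y_v), lam = (log n)^sigma / (4 |y|_oo), Markov's inequality
   and |x^(t1)|_1 <= n e^-(log n)^sigma conclude. *)

Lemma prod_involution_pairs (R : comPzRingType) (n : nat) (m : 'I_n -> 'I_n)
    (m_inv : involutive m) (F : 'I_n -> R) :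
  \prod_v F v = \prod_(r : 'I_n) ((if (r <= m r)%N then F r else 1) *
                         (if (r < m r)%N then F (m r) else 1)).
Proof.
rewrite big_split /= -!big_mkcond /=.
rewrite (bigID (fun v : 'I_n => (v <= m v)%N)) /=; congr (_ * _).
rewrite (reindex_inj (can_inj m_inv)) /=.
by apply: eq_bigl => r; rewrite m_inv -ltnNge.
Qed.

Lemma card_mul_le_sum (R : numDomainType) (T : finType) (P : pred T)
    (F : T -> R) (a : R) :
  (forall w, 0 <= F w) -> (forall w, P w -> a <= F w) ->
  #|P|%:R * a <= \sum_w F w.
Proof.
move=> F0 PF; rewrite mulr_natl -sumr_const.
apply: le_trans (ler_sum _ PF) _.
rewrite [leRHS](bigID P) /= lerDl; exact: sumr_ge0.
Qed.

Lemma expR_le1DxexpR (R : realType) (z : R) : expR z <= 1 + z * expR z.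
Proof.
have ez := expR_gt0 z.
have := expR_ge1Dx (- z); rewrite expRN -(ler_pM2r ez) mulVf ?gt_eqF //.
by rewrite mulrDl mul1r mulNr; lra.
Qed.

Lemma powR_ge1 (R : realType) (a r : R) : 1 <= a -> 0 <= r -> 1 <= a `^ r.
Proof. by move=> a_ge1 r_ge0; rewrite -(powRr0 a) ler_powR. Qed.

Lemma ln_nat_ge1 (R : realType) (n : nat) : (4 <= n)%N -> 1 <= ln (n%:R : R).
Proof.
move=> n_ge4.
have ln2 : 1 / 2 <= ln (2 : R).
  by have := expR_ge1Dx (- ln (2 : R)); rewrite expRN lnK ?posrE // -div1r; lra.
have ln4 : ln (4 : R) = 2 * ln 2.
  have -> : (4 : R) = 2 ^+ 2 by rewrite expr2; lra.
  by rewrite lnXn // mulr_natl.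
have : ln (4 : R) <= ln (n%:R : R).
  by rewrite ler_ln ?posrE ?ltr0n ?ler_nat // (leq_trans _ n_ge4).
lra.
Qed.

(* The two orientations of the excess token when a pair holds h.*2 + o tokens. *)
Lemma mixed_pow_le_mean_pow (R : realFieldType) (h : nat) (o : bool) (a b : R) :
  0 <= a -> 0 <= b ->
  0 <= a ^+ (h + o) * b ^+ h + a ^+ h * b ^+ (h + o) <=
  2 * ((a + b) / 2) ^+ (h.*2 + o).
Proof.
move=> a0 b0; set g := (a + b) / 2.
have g0 : 0 <= g by rewrite divr_ge0 ?addr_ge0.
have ab_g : a * b <= g * g.
  rewrite -subr_ge0.
  have -> : g * g - a * b = ((a - b) / 2) ^+ 2 by rewrite /g; field.
  exact: sqr_ge0.
have abh0 : 0 <= (a * b) ^+ h by rewrite exprn_ge0 ?mulr_ge0.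
have abh : (a * b) ^+ h <= g ^+ h.*2.
  by rewrite -addnn exprD -exprMn lerXn2r // nnegrE mulr_ge0.
case: o => /=; rewrite ?addn0 ?addn1; last first.
  rewrite -exprMn -mulr2n mulrn_wge0 //=.
  by rewrite mulr_natl lerMn2r abh orbT.
rewrite !exprS -[a * a ^+ h * b ^+ h]mulrA -[a ^+ h * (b * b ^+ h)]mulrCA.
rewrite -!exprMn -mulrDl.
have -> : a + b = 2 * g by rewrite /g mulrC mulfVK // pnatr_eq0.
apply/andP; split; first by apply: mulr_ge0 => //; apply: mulr_ge0.
by rewrite -mulrA ler_pM2l // ler_wpM2l.
Qed.

Section ExponentialMoments.
Variable R : realType.
Variable n : nat.

Definition prodX (f : 'I_n -> R) (x : 'I_n -> nat) : R := \prod_v f v ^+ x v.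

Definition match_avg (m : 'I_n -> 'I_n) (f : 'I_n -> R) (u : 'I_n) : R :=
  (f u + f (m u)) / 2.

(* [back_avg M t k f] is the column vector M^(t+1) ... M^(t+k) f: the
   continuous process run backwards, dual to [cont_run M t k]. *)
Fixpoint back_avg (M : nat -> 'I_n -> 'I_n) (t k : nat) (f : 'I_n -> R)
    : 'I_n -> R :=
  if k is k'.+1 then match_avg (M t.+1) (back_avg M t.+1 k' f) else f.

Lemma back_avg_ge0 M t k f :
  (forall v, 0 <= f v) -> forall v, 0 <= back_avg M t k f v.
Proof.
elim: k t => [|k IHk] t f0 v //=.
by rewrite /match_avg divr_ge0 // addr_ge0 // IHk.
Qed.

Lemma back_avg1 M t k : back_avg M t k (fun=> 1) = fun=> 1.
Proof.
elim: k t => [|k IHk] t //=.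
by rewrite IHk; apply: funext => u; rewrite /match_avg; field.
Qed.

(* The factor of [prodX f (dstep m c x)] coming from the pair {r, m r} with
   r <= m r; it depends only on the coin of r. *)
Definition pair_term (m : 'I_n -> 'I_n) (f : 'I_n -> R) (x : 'I_n -> nat)
    (r : 'I_n) (b : bool) : R :=
  (if (r <= m r)%N then f r ^+ dstep m (fun=> b) x r else 1) *
  (if (r < m r)%N then f (m r) ^+ dstep m (fun=> b) x (m r) else 1).

Lemma prodX_dstep m (m_inv : involutive m) f c x :
  prodX f (dstep m c x) = \prod_r pair_term m f x r (c r).
Proof.
rewrite /prodX (prod_involution_pairs m_inv); apply: eq_bigr => r _.
rewrite /pair_term; case: ltngtP => r_mr //.
- have r_unmatched : m r != r by rewrite neq_ltn r_mr orbT.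
  have mr_unmatched : m (m r) != m r by rewrite m_inv eq_sym.
  rewrite /dstep (negbTE r_unmatched) (negbTE mr_unmatched) r_mr m_inv.
  by rewrite ltnNge (ltnW r_mr).
- have r_fixed : m r = r by apply: val_inj.
  by rewrite /dstep r_fixed eqxx.
Qed.

Lemma sum_dstep_prodX m (m_inv : involutive m) f (f0 : forall v, 0 <= f v) x :
  \sum_(c : {ffun 'I_n -> bool}) prodX f (dstep m c x) <=
  2 ^+ n * prodX (match_avg m f) x.
Proof.
under eq_bigr do rewrite (prodX_dstep m_inv).
rewrite -(bigA_distr_bigA (pair_term m f x)) /=.
have -> : (2 : R) ^+ n = \prod_(r : 'I_n) 2 by rewrite prodr_const card_ord.
rewrite /prodX [X in _ <= _ * X](prod_involution_pairs m_inv) -big_split /=.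
apply: ler_prod => r _; rewrite big_bool /= /pair_term.
have fX0 v k : 0 <= f v ^+ k by apply: exprn_ge0.
case: ltngtP => r_mr.
- have r_unmatched : m r != r by rewrite neq_ltn r_mr orbT.
  have mr_unmatched : m (m r) != m r by rewrite m_inv eq_sym.
  have mr_r : (m r < r)%N = false by rewrite ltnNge ltnW.
  rewrite /dstep /match_avg (negbTE r_unmatched) (negbTE mr_unmatched) m_inv.
  rewrite r_mr mr_r /= [(x (m r) + _)%N]addnC.
  rewrite [f (m r) + f r]addrC -exprD andbT andbF addn0.
  set s := (x r + x (m r))%N.
  have := mixed_pow_le_mean_pow s./2 (odd s) (f0 r) (f0 (m r)).
  by rewrite [((s./2).*2 + _)%N]addnC odd_double_half.
- by rewrite !mulr1; apply/andP; split; lra.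
- have r_fixed : m r = r by apply: val_inj.
  rewrite /dstep /match_avg r_fixed eqxx /= !mulr1.
  have -> : (f r + f r) / 2 = f r by field.
  by have fx0 := fX0 r (x r); apply/andP; split; lra.
Qed.

Lemma sum_coins_cons k (F : seq ('I_n -> bool) -> R) :
  \sum_(w : coins n k.+1) F (coin_seq w) =
  \sum_(c : {ffun 'I_n -> bool}) \sum_(w : coins n k)
     F ((fun u => c u) :: coin_seq w).
Proof.
rewrite pair_bigA /=.
pose cons_coins (p : {ffun 'I_n -> bool} * coins n k) : coins n k.+1 :=
  [ffun i => if unlift ord0 i is Some j then p.2 j else p.1].
pose uncons_coins (w : coins n k.+1) : {ffun 'I_n -> bool} * coins n k :=
  (w ord0, [ffun j => w (lift ord0 j)]).
have consK : cancel cons_coins uncons_coins.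
  move=> [c w]; rewrite /cons_coins /uncons_coins /=; congr (_, _).
    by rewrite ffunE unlift_none.
  by apply/ffunP => j; rewrite !ffunE liftK.
have unconsK : cancel uncons_coins cons_coins.
  move=> w; apply/ffunP => i; rewrite /cons_coins /uncons_coins !ffunE.
  by case: unliftP => [j ->|->] //=; rewrite ffunE.
rewrite (reindex cons_coins) /=; last by exists uncons_coins => p _.
apply: eq_bigr => -[c w] _ /=; congr F.
rewrite /coin_seq enum_ordSl /= -map_comp; congr (_ :: _).
  by apply: funext => u; rewrite ffunE unlift_none.
by apply: eq_map => j /=; apply: funext => u; rewrite ffunE liftK.
Qed.

Lemma sum_drun_prodX M (M_inv : forall t, involutive (M t)) k t x f :
  (forall v, 0 <= f v) ->
  \sum_(w : coins n k) prodX f (drun M t (coin_seq w) x) <=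
  (2 ^+ n) ^+ k * prodX (back_avg M t k f) x.
Proof.
elim: k t x f => [|k IHk] t x f f0.
  rewrite (eq_bigr (fun=> prodX f x)) => [|w _]; last first.
    by rewrite /coin_seq enum_ord0.
  by rewrite sumr_const card_ffun card_ord expn0 mulr1n expr0 mul1r.
rewrite (sum_coins_cons _ (fun cs => prodX f (drun M t cs x))) /=.
apply: le_trans (_ : \sum_(c : {ffun 'I_n -> bool})
    (2 ^+ n) ^+ k * prodX (back_avg M t.+1 k f) (dstep (M t.+1) c x) <= _).
  by apply: ler_sum => c _; apply: IHk.
rewrite -mulr_sumr exprS [2 ^+ n * _]mulrC -mulrA ler_pM2l ?exprn_gt0 //.
exact/sum_dstep_prodX/back_avg_ge0.
Qed.

Lemma sum_mul_match_avg m (xi : 'rV[R]_n) h :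
  \sum_u xi 0 u * match_avg m h u = \sum_u (xi *m matching_mx R m) 0 u * h u.
Proof.
under [RHS]eq_bigr do rewrite mxE big_distrl /=.
rewrite exchange_big /=; apply: eq_bigr => j _.
under eq_bigr do rewrite -mulrA.
rewrite -mulr_sumr; congr (_ * _).
under eq_bigr do rewrite mxE.
rewrite /match_avg; case: eqP => [j_fixed|/eqP j_matched].
  rewrite (bigD1 j) //= eqxx mul1r big1 ?addr0; first by rewrite j_fixed; field.
  by move=> u /negbTE; rewrite eq_sym => ->; rewrite mul0r.
rewrite (bigD1 j) //= eqxx /= (bigD1 (m j)) //= eqxx orbT big1 ?addr0.
  by field.
by move=> u /andP [/negbTE -> /negbTE ->]; rewrite mul0r.
Qed.

Lemma sum_mul_back_avg M k t (xi : 'rV[R]_n) g :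
  \sum_u xi 0 u * back_avg M t k g u = \sum_v (cont_run M t k xi) 0 v * g v.
Proof. by elim: k t xi => [|k IHk] t xi //=; rewrite sum_mul_match_avg IHk. Qed.

Lemma sum_cont_run M t k (xi : 'rV[R]_n) :
  \sum_v (cont_run M t k xi) 0 v = \sum_v xi 0 v.
Proof.
have := sum_mul_back_avg M k t xi (fun=> 1); rewrite back_avg1 => duality.
transitivity (\sum_v cont_run M t k xi 0 v * 1).
  by apply: eq_bigr => v _; rewrite mulr1.
by rewrite -duality; apply: eq_bigr => u _; rewrite mulr1.
Qed.

Lemma disc_le_entry (p : 'rV[R]_n) eps v :
  disc_le p eps -> n%:R * p 0 v <= \sum_w p 0 w + n%:R * eps.
Proof.
move=> p_disc.
have : \sum_(w < n) p 0 v <= \sum_(w < n) (p 0 w + eps).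
  apply: ler_sum => w _.
  by rewrite -lerBlDl; apply: le_trans (ler_norm _) (p_disc v w).
by rewrite big_split /= !sumr_const card_ord !mulr_natl.
Qed.

Lemma back_avg_le_smoothing M t k (eps : R) :
  (forall xi : 'rV[R]_n, disc_le xi n%:R -> disc_le (cont_run M t k xi) eps) ->
  forall g, (forall v, 0 <= g v) ->
  forall u0, n%:R * back_avg M t k g u0 <= (1 + eps) * \sum_v g v.
Proof.
move=> smooth g g0 u0.
have n_gt0 : (0 : R) < n%:R by rewrite ltr0n (leq_ltn_trans _ (ltn_ord u0)).
pose xi : 'rV[R]_n := \row_v (if v == u0 then n%:R else 0).
have xi_disc : disc_le xi n%:R.
  move=> a b; rewrite !mxE; case: (a == u0); case: (b == u0);
    by rewrite ?subrr ?normr0 ?subr0 ?sub0r ?normrN ?normr_nat ?ler0n.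
have sum_xi (q : 'I_n -> R) : \sum_u xi 0 u * q u = n%:R * q u0.
  rewrite (bigD1 u0) //= mxE eqxx big1 ?addr0 // => u /negbTE u_ne.
  by rewrite mxE u_ne mul0r.
set p := cont_run M t k xi.
have p_mass : \sum_v p 0 v = n%:R.
  rewrite sum_cont_run -[RHS]mulr1 -(sum_xi (fun=> 1)).
  by apply: eq_bigr => u _; rewrite mulr1.
have p_le v : p 0 v <= 1 + eps.
  have := disc_le_entry v (smooth xi xi_disc); rewrite -/p p_mass.
  by move=> p_entry; rewrite -(ler_pM2l n_gt0) mulrDr mulr1.
rewrite -sum_xi sum_mul_back_avg mulr_sumr; apply: ler_sum => v _.
exact: ler_wpM2r.
Qed.

End ExponentialMoments.

Lemma prob_ge_mulexpR_le (R : realType) n (M : nat -> 'I_n -> 'I_n)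
    (M_inv : forall t, involutive (M t)) t1 t2 (eps : R) :
  (forall xi : 'rV[R]_n, disc_le xi n%:R ->
     disc_le (cont_run M t1 (t2 - t1) xi) eps) ->
  forall (x : 'I_n -> nat) (y : 'I_n -> R) (lam T : R), 0 <= lam ->
  prob R (fun w : coins n (t2 - t1) =>
            T <= \sum_v y v * (load_at M t1 t2 x w v)%:R) * expR (lam * T) <=
  ((1 + eps) / n%:R * \sum_v expR (lam * y v)) ^+ (\sum_v x v).
Proof.
move=> smooth x y lam T lam0.
set g := fun v => expR (lam * y v).
have g0 v : 0 <= g v by apply/ltW/expR_gt0.
have prodX_g z : prodX g z = expR (lam * \sum_v y v * (z v)%:R).
  rewrite /prodX mulr_sumr expR_sum; apply: eq_bigr => v _.
  by rewrite mulrA expRM_natr.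
have card_coins : (#|{: coins n (t2 - t1)}|%:R : R) = (2 ^+ n) ^+ (t2 - t1).
  by rewrite card_ffun card_ffun card_bool !card_ord natrX natrX.
set B := (1 + eps) / n%:R * \sum_v g v.
have back_avg_le u : back_avg M t1 (t2 - t1) g u <= B.
  have n_gt0 : (0 : R) < n%:R by rewrite ltr0n (leq_ltn_trans _ (ltn_ord u)).
  rewrite -(ler_pM2l n_gt0) /B mulrA mulrCA mulfV ?gt_eqF // mulr1.
  exact: back_avg_le_smoothing.
set P := fun w : coins n (t2 - t1) =>
  T <= \sum_v y v * (load_at M t1 t2 x w v)%:R.
have markov : #|P|%:R * expR (lam * T) <=
    \sum_(w : coins n (t2 - t1)) prodX g (load_at M t1 t2 x w).
  apply: card_mul_le_sum => [w|w Pw].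
    by rewrite prodr_ge0 // => v _; rewrite exprn_ge0.
  by rewrite prodX_g ler_expR ler_wpM2l.
rewrite /prob card_coins mulrAC ler_pdivrMr ?exprn_gt0 //.
apply: le_trans markov _; apply: le_trans (sum_drun_prodX M_inv _ t1 x g0) _.
rewrite mulrC ler_wpM2r ?exprn_ge0 // /prodX -prodrXr; apply: ler_prod => v _.
have Q0 := back_avg_ge0 M t1 (t2 - t1) g0 v.
rewrite exprn_ge0 //= lerXn2r ?nnegrE ?back_avg_le //.
exact: le_trans Q0 (back_avg_le v).
Qed.

Lemma norm_inf_ge (R : realType) n (y : 'I_n -> R) v : y v <= norm_inf y.
Proof. exact: le_trans (ler_norm _) (le_bigmax 0 (fun v => `|y v|) v). Qed.

Lemma norm_inf_gt0 (R : realType) n (y : 'I_n -> R) :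
  \sum_v y v = 1 -> 0 < norm_inf y.
Proof.
move=> y1; have : \sum_(v < n) y v <= \sum_(v < n) norm_inf y.
  by apply: ler_sum => v _; apply: norm_inf_ge.
rewrite y1 sumr_const card_ord -mulr_natl => y_le.
rewrite ltNge; apply/negP => Y_le0.
by have := mulr_ge0_le0 (ler0n R n) Y_le0; lra.
Qed.

Lemma mean_expR_le (R : realType) n (y : 'I_n -> R) (eps lam L : R) :
  (0 < n)%N -> 0 <= eps -> 0 <= lam -> (forall v, 0 <= y v) ->
  \sum_v y v = 1 -> (forall v, lam * y v <= L) ->
  (1 + eps) / n%:R * \sum_v expR (lam * y v) <=
  expR (eps + lam * expR L / n%:R).
Proof.
move=> n_gt0 eps0 lam0 y0 y1 yL.
have n_pos : (0 : R) < n%:R by rewrite ltr0n.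
have eL0 : 0 <= expR L by apply/ltW/expR_gt0.
have term_le v : expR (lam * y v) <= 1 + lam * y v * expR L.
  apply: le_trans (expR_le1DxexpR _) _.
  by rewrite lerD2l ler_wpM2l ?mulr_ge0 // ler_expR.
have sum_le : \sum_v expR (lam * y v) <= n%:R + lam * expR L.
  apply: le_trans (ler_sum _ (fun v _ => term_le v)) _.
  by rewrite big_split /= sumr_const card_ord -mulr_suml -mulr_sumr y1 mulr1.
apply: le_trans (_ : (1 + eps) * (1 + lam * expR L / n%:R) <= _).
  have -> : 1 + lam * expR L / n%:R = (n%:R + lam * expR L) / n%:R.
    by rewrite mulrDl divff // gt_eqF.
  by rewrite -mulrA ler_wpM2l ?addr_ge0 // [_^-1 * _]mulrC ler_wpM2r ?invr_ge0.
rewrite expRD; apply: ler_pM; rewrite ?expR_ge1Dx //.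
  by rewrite addr_ge0.
by rewrite addr_ge0 // divr_ge0 ?mulr_ge0.
Qed.

Lemma chernoff_exponent_le (R : realType) (n m : nat) (a s lam Y : R) :
  (0 < n)%N -> 1 <= a -> 1 <= s -> 0 <= lam -> lam * Y = a / 4 ->
  m%:R <= n%:R * expR (- a) ->
  (n%:R ^- 3 + lam * expR (a / 4) / n%:R) * m%:R
    - lam * (expR (- (5^-1 * a)) + 8 * Y * s) <= - (s * a) / 6.
Proof.
move=> n_gt0 a1 s1 lam0 lamY m_le.
have n_pos : (0 : R) < n%:R by rewrite ltr0n.
have n_neq0 : (n%:R : R) != 0 by rewrite gt_eqF.
set c := n%:R ^- 3 + lam * expR (a / 4) / n%:R.
have c0 : 0 <= c.
  rewrite /c addr_ge0 ?invr_ge0 ?exprn_ge0 ?ler0n //.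
  by rewrite divr_ge0 ?mulr_ge0 ?ler0n // ltW ?expR_gt0.
have cm_le : c * m%:R <= c * (n%:R * expR (- a)) by exact: ler_wpM2l.
have c_eq : c * (n%:R * expR (- a)) =
    (n%:R ^+ 2)^-1 * expR (- a) + lam * expR (a / 4 - a).
  by rewrite /c expRD; field.
have n2 : (n%:R ^+ 2)^-1 <= (1 : R).
  by rewrite invf_le1 ?exprn_gt0 // exprn_ege1 // ler1n.
have ea : expR (- a) <= 1 by rewrite expR_le1; lra.
have ea0 : 0 <= expR (- a) by apply/ltW/expR_gt0.
have n20 : 0 <= (n%:R ^+ 2)^-1 :> R by rewrite invr_ge0 exprn_ge0.
have decay : lam * expR (a / 4 - a) <= lam * expR (- (5^-1 * a)).
  by rewrite ler_wpM2l // ler_expR; lra.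
have lamT : lam * (expR (- (5^-1 * a)) + 8 * Y * s) =
    lam * expR (- (5^-1 * a)) + 2 * (s * a).
  rewrite mulrDr; congr (_ + _).
  have -> : lam * (8 * Y * s) = 8 * (lam * Y) * s by ring.
  by rewrite lamY; field.
have sa1 : 1 <= s * a by nra.
nra.
Qed.

Theorem lemma3p5 (R : realType) (sigma delta : R) :
  0 < sigma < 1 -> 0 < delta ->
  exists N : nat, forall n : nat, (N <= n)%N ->
  forall (E : rel 'I_n) (M : nat -> 'I_n -> 'I_n),
  simple_graph E -> (forall t, is_matching E (M t)) ->
  forall t1 t2 : nat, (t1 < t2)%N ->
  smoothing M t1 t2 (n%:R : R) ((n%:R : R) ^- 3) ->
  forall (x : 'I_n -> nat) (y : 'I_n -> R),
  \sum_(v < n) ((x v)%:R : R) <= n%:R * expR (- (ln (n%:R : R) `^ sigma)) ->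
  (forall v, 0 <= y v) -> \sum_(v < n) y v = 1 ->
  prob R (fun w : coins n (t2 - t1) =>
          expR (- (5^-1 * ln (n%:R : R) `^ sigma))
            + 8 * norm_inf y * ln (n%:R : R) `^ delta
          <= \sum_(v < n) y v * ((load_at M t1 t2 x w v)%:R : R))
    <= expR (- (ln (n%:R : R) `^ (delta + sigma)) / 6).
Proof.
move=> /andP[sigma_gt0 _] delta_gt0.
exists 4%N => n n_ge4 E M _ M_match t1 t2 _ smooth x y x_small y0 y1.
have M_inv t : involutive (M t) by case: (M_match t).
have n_gt0 : (0 < n)%N by apply: leq_trans n_ge4.
have ell_ge1 : 1 <= ln (n%:R : R) by apply: ln_nat_ge1.
have a_ge1 : 1 <= ln (n%:R : R) `^ sigma by rewrite powR_ge1 // ltW.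
have s_ge1 : 1 <= ln (n%:R : R) `^ delta by rewrite powR_ge1 // ltW.
rewrite powRD; last by apply/implyP => _; rewrite gt_eqF // (lt_le_trans ltr01).
set a := ln _ `^ sigma in a_ge1 x_small *; set s := ln _ `^ delta in s_ge1 *.
have Y_gt0 : 0 < norm_inf y by apply: norm_inf_gt0.
set Y := norm_inf y in Y_gt0 *; set lam := a / (4 * Y).
have lam_ge0 : 0 <= lam.
  by rewrite divr_ge0 ?mulr_ge0 ?(ltW Y_gt0) ?(le_trans ler01 a_ge1).
have lamY : lam * Y = a / 4 by rewrite /lam invfM mulrA divfK ?gt_eqF.
set T := _ + _ * s.
have eps_ge0 : 0 <= (n%:R ^- 3 : R) by rewrite invr_ge0 exprn_ge0.
have mean := mean_expR_le n_gt0 eps_ge0 lam_ge0 y0 y1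
  (fun v => ler_wpM2l lam_ge0 (norm_inf_ge y v) : lam * y v <= lam * Y).
have m_small : ((\sum_v x v)%N%:R : R) <= n%:R * expR (- a) by rewrite natr_sum.
have expo := chernoff_exponent_le n_gt0 a_ge1 s_ge1 lam_ge0 lamY m_small.
rewrite -(ler_pM2r (expR_gt0 (lam * T))).
apply: le_trans (prob_ge_mulexpR_le M_inv smooth x y T lam_ge0) _.
rewrite lamY in mean; rewrite -expRD.
apply: le_trans (lerXn2r _ _ _ mean) _; rewrite ?nnegrE ?expR_ge0 //.
  by rewrite mulr_ge0 ?divr_ge0 ?addr_ge0 ?sumr_ge0 // => v _; rewrite expR_ge0.
by rewrite -expRM_natr ler_expR /T; lra.
Qed.
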